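(* Let $A,B\in M_n(\mathbb{R}_+)$ be nilpotent and let $C=[A,B]_\oplus = AB\oplus BA$. If $AC=BC=0$, then $A$ and $B$ are simultaneously triangularizable.
   Context: Max algebra: $\mathbb{R}_+$ the nonnegative reals with $a\oplus b=\max\{a,b\}$ and ordinary multiplication; for $A,B\in M_n(\mathbb{R}_+)$, $(AB)_{ij}=\max_k a_{ik}b_{kj}$ and $(A\oplus B)_{ij}=\max\{a_{ij},b_{ij}\}$. A matrix is nilpotent if some power (max-product) is $0$. $GL_n(\mathbb{R}_+)$ is the set of matrices invertible under this product (the generalized permutation matrices). $A,B$ are simultaneously triangularizable if there is one $P\in GL_n(\mathbb{R}_+)$ with both $P^{-1}AP$ and $P^{-1}BP$ upper triangular. *)

From HB Require Import structures.
From mathcomp Require Import all_boot all_order all_algebra.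
From mathcomp Require Import reals.
Set Implicit Arguments. Unset Strict Implicit. Unset Printing Implicit Defensive.
Import Order.TTheory GRing.Theory Num.Theory.
Local Open Scope ring_scope.

Section MaxAlgebra.
Variable R : realType.

Definition nonneg_mx (n : nat) (A : 'M[R]_n) : Prop := forall i j, 0 <= A i j.

(* Max-times product: (A B)_{ij} = max_k a_{ik} b_{kj} (0 is the neutral
   element of max on R_+). *)
Definition maxmul (n : nat) (A B : 'M[R]_n) : 'M[R]_n :=
  \matrix_(i, j) \big[Num.max/0]_(k < n) (A i k * B k j).

Definition maxadd (n : nat) (A B : 'M[R]_n) : 'M[R]_n :=
  \matrix_(i, j) Num.max (A i j) (B i j).

(* Powers for the max product; the identity of the max algebra is the
   usual identity matrix. *)
Definition maxpow (n : nat) (A : 'M[R]_n) (k : nat) : 'M[R]_n :=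
  iter k (maxmul A) 1%:M.

Definition max_nilpotent (n : nat) (A : 'M[R]_n) : Prop :=
  exists k : nat, maxpow A k = 0.

Definition upper_tri (n : nat) (A : 'M[R]_n) : Prop :=
  forall i j : 'I_n, (j < i)%N -> A i j = 0.

(* P in GL_n(R_+): P in M_n(R_+) with a two-sided max-product inverse
   Q in M_n(R_+). *)
Definition max_inverse (n : nat) (P Q : 'M[R]_n) : Prop :=
  nonneg_mx P /\ nonneg_mx Q /\ maxmul P Q = 1%:M /\ maxmul Q P = 1%:M.

Definition sim_triangularizable (n : nat) (A B : 'M[R]_n) : Prop :=
  exists P Pinv : 'M[R]_n, max_inverse P Pinv /\
    upper_tri (maxmul (maxmul Pinv A) P) /\
    upper_tri (maxmul (maxmul Pinv B) P).

End MaxAlgebra.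

From mathcomp Require Import all_boot all_order all_algebra.
From mathcomp Require Import fingroup perm.
From mathcomp Require Import reals.
Set Implicit Arguments. Unset Strict Implicit. Unset Printing Implicit Defensive.
Import Order.TTheory GRing.Theory Num.Theory.
Local Open Scope ring_scope.

(* Read the supports of A and B as digraphs a and b on 'I_n.  If an edge
   h -> i of a or b is followed by a mixed pair i -a-> j -b-> k (or b then a),
   then C i k > 0, hence (A C) h k > 0 or (B C) h k > 0.  So under AC = BC = 0
   every walk in the union of a and b is monochromatic after its first edge.
   Nilpotency bounds the length of monochromatic walks, hence of all walks in
   the union, which is therefore acyclic; numbering the vertices along a
   topological order gives a permutation matrix conjugating A and B to upper
   triangular form. *)

Section UnionPaths.
Variables (T : Type) (a b : rel T).

Hypothesis unmixed : forall h i j k,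
  relU a b h i -> ~~ (a i j && b j k || b i j && a j k).

Lemma path_relU_pure h y p :
  relU a b h y -> path (relU a b) y p -> path a y p || path b y p.
Proof.
elim: p h y => [|z p IH] h y //= hy /andP[yz /(IH y z yz)].
case: p {IH} => [|w p] /=; first by case/orP: yz => ->; rewrite ?orbT.
move/orP=> pure; have := @unmixed h y z w hy.
by case/orP: yz => ->; case: pure => /andP[-> ->]; rewrite ?orbT.
Qed.

Lemma path_relU_size ka kb :
  (forall x p, path a x p -> (size p < ka)%N) ->
  (forall x p, path b x p -> (size p < kb)%N) ->
  forall x p, path (relU a b) x p -> (size p <= maxn ka kb)%N.
Proof.
move=> Ka Kb x [//|y p] /= /andP[xy /(path_relU_pure xy)].
by case/orP=> [/Ka|/Kb] lt_p; rewrite leq_max lt_p ?orbT.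
Qed.

End UnionPaths.

Section BoundedPaths.
Variables (T : finType) (e : rel T).

Lemma cycle_pump x y : e x y -> connect e y x ->
  forall k, exists p, [/\ path e x p, last x p = x & (k <= size p)%N].
Proof.
move=> exy /connectP[c yc xc]; elim=> [|k [p [ep lp kp]]]; first by exists [::].
exists ((y :: c) ++ p); rewrite cat_path last_cat /= exy yc -xc lp ep.
by rewrite size_cat /= ltnS (leq_trans kp) ?leq_addl.
Qed.

Lemma bounded_path_acyclic N :
  (forall x p, path e x p -> (size p <= N)%N) ->
  forall x y, e x y -> ~~ connect e y x.
Proof.
move=> bnd x y exy; apply/negP => /(cycle_pump exy)/(_ N.+1)[p [ep _]].
by rewrite ltnNge (bnd _ _ ep).
Qed.

Lemma ancestors_proper x y : e x y -> ~~ connect e y x ->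
  [set z | connect e z x] \proper [set z | connect e z y].
Proof.
move=> exy yx; apply/properP; split.
  by apply/subsetP => z; rewrite !inE => /connect_trans->//; apply: connect1.
by exists y; rewrite !inE ?connect0.
Qed.

End BoundedPaths.

Lemma injective_rank_perm n (key : 'I_n -> nat) : injective key ->
  exists s : 'S_n, forall x y, (key x < key y)%N -> (s x < s y)%N.
Proof.
move=> key_inj; pose r x := #|[set y | (key y < key x)%N]|.
have r_mono x y : (key x < key y)%N -> (r x < r y)%N.
  move=> kxy; apply: proper_card; apply/properP; split.
    by apply/subsetP => z; rewrite !inE => /ltn_trans->.
  by exists x; rewrite !inE ?kxy ?ltnn.
have r_lt x : (r x < n)%N.
  rewrite -[n]card_ord -cardsT; apply: proper_card; rewrite properT.
  by apply/eqP => /setP/(_ x); rewrite !inE ltnn.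
have r_inj : injective (fun x => Ordinal (r_lt x)).
  move=> x y [] rxy; apply: key_inj.
  by case: (ltngtP (key x) (key y)) => // /r_mono; rewrite rxy ltnn.
by exists (perm r_inj) => x y /r_mono; rewrite !permE.
Qed.

Lemma acyclic_rank_perm n (e : rel 'I_n) :
  (forall x y, e x y -> ~~ connect e y x) ->
  exists s : 'S_n, forall x y, e x y -> (s x < s y)%N.
Proof.
move=> acyc; pose height y := #|[set z | connect e z y]|.
(* Lexicographic order on (height, index), encoded as one natural number. *)
have key_inj : injective (fun x : 'I_n => height x * n + x)%N.
  move=> x y /(congr1 (modn^~ n)); rewrite !modnMDl !modn_small //.
  exact: val_inj.
have [s s_mono] := injective_rank_perm key_inj.
exists s => x y exy; apply: s_mono.
have hxy : (height x < height y)%N by apply/proper_card/ancestors_proper/acyc.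
rewrite (leq_trans (_ : _ < (height x).+1 * n)%N) //.
  by rewrite mulSn addnC ltn_add2r.
by rewrite (leq_trans (leq_mul hxy (leqnn n))) ?leq_addr.
Qed.

Section MaxMatrices.
Variables (R : realType) (n : nat).
Implicit Types (A B X : 'M[R]_n) (s : 'S_n).

Definition mx_graph A : rel 'I_n := [rel i j | 0 < A i j].

Lemma maxmul_gt0 A B i j k : 0 < A i k -> 0 < B k j -> 0 < maxmul A B i j.
Proof.
move=> Aik Bkj; rewrite mxE; apply: lt_le_trans (mulr_gt0 Aik Bkj) _.
exact: (le_bigmax _ (fun k => A i k * B k j)).
Qed.

Lemma path_maxpow_gt0 A x p :
  path (mx_graph A) x p -> 0 < maxpow A (size p) x (last x p).
Proof.
elim: p x => [|y p IH] x /=; first by rewrite mxE eqxx ltr01.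
by case/andP=> Axy /IH; apply: maxmul_gt0.
Qed.

Lemma maxpow_eq0_path_size A k x p :
  maxpow A k = 0 -> path (mx_graph A) x p -> (size p < k)%N.
Proof.
move=> Ak0 Ap; rewrite ltnNge; apply/negP => le_k_p.
move: Ap; rewrite -(cat_take_drop k p) cat_path => /andP[/path_maxpow_gt0].
by rewrite size_takel // Ak0 mxE ltxx.
Qed.

Lemma commutator_annihilated_unmixed A B :
  let C := maxadd (maxmul A B) (maxmul B A) in
  maxmul A C = 0 -> maxmul B C = 0 ->
  forall h i j k, relU (mx_graph A) (mx_graph B) h i ->
    ~~ (mx_graph A i j && mx_graph B j k || mx_graph B i j && mx_graph A j k).
Proof.
move=> C AC0 BC0 h i j k hi; apply/negP => mixed.
have Cik : 0 < C i k.
  rewrite mxE lt_max.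
  by case/orP: mixed => /andP[ij jk]; rewrite (maxmul_gt0 ij jk) ?orbT.
by case/orP: hi => /maxmul_gt0/(_ Cik); rewrite ?AC0 ?BC0 mxE ltxx.
Qed.

Lemma perm_mxE s i j : perm_mx s i j = (s i == j)%:R :> R.
Proof. by rewrite !mxE. Qed.

Lemma perm_mx_nonneg s : nonneg_mx (perm_mx s : 'M[R]_n).
Proof. by move=> i j; rewrite perm_mxE ler0n. Qed.

Lemma maxmul_perm_mxl s X :
  nonneg_mx X -> maxmul (perm_mx s) X = row_perm s X.
Proof.
move=> X_ge0; apply/matrixP => i j; rewrite !mxE; apply/le_anti/andP; split.
  apply: bigmax_le => [|k _]; rewrite ?perm_mxE //.
  by case: eqP => [<-|_]; rewrite ?mul1r ?mul0r.
have := le_bigmax 0 (fun k => perm_mx s i k * X k j) (s i).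
by rewrite perm_mxE eqxx mul1r.
Qed.

Lemma maxmul_perm_mxr s X :
  nonneg_mx X -> maxmul X (perm_mx s) = col_perm s^-1%g X.
Proof.
move=> X_ge0; apply/matrixP => i j; rewrite !mxE; apply/le_anti/andP; split.
  apply: bigmax_le => [|k _]; rewrite ?perm_mxE //.
  by case: eqP => [<-|_]; rewrite ?mulr1 ?mulr0 ?permK.
have := le_bigmax 0 (fun k => X i k * perm_mx s k j) ((s^-1)%g j).
by rewrite perm_mxE permKV eqxx mulr1.
Qed.

Lemma perm_mx_max_inverse s :
  max_inverse (perm_mx s) (perm_mx s^-1%g : 'M[R]_n).
Proof.
have [P_ge0 Q_ge0] := (perm_mx_nonneg s, perm_mx_nonneg s^-1).
rewrite /max_inverse !maxmul_perm_mxl // /perm_mx -!row_permM.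
by rewrite mulgV mulVg row_perm1.
Qed.

Lemma perm_conj_upper_tri s X : nonneg_mx X ->
  (forall k l, 0 < X k l -> (s k < s l)%N) ->
  upper_tri (maxmul (maxmul (perm_mx s^-1%g) X) (perm_mx s)).
Proof.
move=> X_ge0 s_mono; rewrite maxmul_perm_mxl // maxmul_perm_mxr; last first.
  by move=> i j; rewrite mxE.
move=> i j lt_ji; rewrite !mxE; apply/eqP; rewrite eq_le X_ge0 andbT leNgt.
by apply/negP => /s_mono; rewrite !permKV ltnNge ltnW.
Qed.

End MaxMatrices.

Theorem theorem3p9 (R : realType) (n : nat) (A B : 'M[R]_n) :
  nonneg_mx A -> nonneg_mx B ->
  max_nilpotent A -> max_nilpotent B ->
  let C := maxadd (maxmul A B) (maxmul B A) in
  maxmul A C = 0 -> maxmul B C = 0 ->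
  sim_triangularizable A B.
Proof.
move=> A_ge0 B_ge0 [ka Aka0] [kb Bkb0] C AC0 BC0.
have union_bounded := path_relU_size (commutator_annihilated_unmixed AC0 BC0)
  (fun x p => maxpow_eq0_path_size Aka0) (fun x p => maxpow_eq0_path_size Bkb0).
have [s s_mono] := acyclic_rank_perm (bounded_path_acyclic union_bounded).
exists (perm_mx s), (perm_mx s^-1%g); split; first exact: perm_mx_max_inverse.
split; apply: perm_conj_upper_tri => // k l kl; apply: s_mono.
  by rewrite /= /mx_graph /= kl.
by rewrite /= /mx_graph /= kl orbT.
Qed.
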